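(* Let $M\models\mathrm{AA}$, let $D\subseteq M$ be formula-definable and let $I\subseteq M$ be a proper cut with $I<M\setminus I$. Assume that for every $a\in I$ there is $u\in I\cap D$ with $a\le u$. Then for every $\epsilon>0$ and every $b\in M\setminus I$ there is $v\in (M\setminus I)\cap D^\epsilon$ with $v\le b$.
   Context: Structures are complete metric spaces of diameter at most $1$ in the language $L=\{+,\cdot,\wedge,\vee,0,1\}$ (operations $1$-Lipschitz, $d$ the only relation symbol). Affine formulas are built from $1$ and atomic formulas $d(t_1,t_2)$ using $+$, scalar multiplication by reals, $\sup_x$, $\inf_x$. $\mathrm{AA}$ is the set of all closed affine conditions true in every model of first-order Peano arithmetic (formulated in $L$ with lattice operations min/max and discrete metric). $x\le y$ means $x\wedge y=x$, $x<y$ means $x\le y$, $x\neq y$. A cut is a nonempty $I\subseteq M$ with $x\le y\in I\Rightarrow x\in I$ and $x\in I\Rightarrow x+1\in I$; proper means $I\ne M$; $I<M\setminus I$ means $x<y$ for all $x\in I$, $y\notin I$. A set $D$ is formula-definable if it is closed and $d(x,D)=\phi^M(x)$ for all $x$ for some affine formula $\phi$ with parameters from $M$. $D^\epsilon=\{x\in M: d(x,D)<\epsilon\}$. *)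

From HB Require Import structures.
From mathcomp Require Import all_boot all_order all_algebra.
From mathcomp Require Import boolp classical_sets reals.
Set Implicit Arguments. Unset Strict Implicit. Unset Printing Implicit Defensive.
Import Order.TTheory GRing.Theory Num.Theory.
Local Open Scope classical_set_scope.
Local Open Scope ring_scope.

Record LStr (R : realType) := {
  car :> Type;
  dist : car -> car -> R;
  sadd : car -> car -> car;
  smul : car -> car -> car;
  smeet : car -> car -> car;
  sjoin : car -> car -> car;
  szero : car;
  sone : car;
  dist_ge0 : forall x y, 0 <= dist x y;
  dist_le1 : forall x y, dist x y <= 1;
  dist_refl : forall x, dist x x = 0;
  dist_sep : forall x y, dist x y = 0 -> x = y;
  dist_sym : forall x y, dist x y = dist y x;
  dist_tri : forall x y z, dist x z <= dist x y + dist y z;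
  dist_complete : forall u : nat -> car,
    (forall eps : R, 0 < eps -> exists N, forall m n, (N <= m)%N -> (N <= n)%N ->
        dist (u m) (u n) < eps) ->
    exists l, forall eps : R, 0 < eps -> exists N, forall n, (N <= n)%N ->
        dist (u n) l < eps;
  sadd_lip : forall x y x' y', dist (sadd x y) (sadd x' y') <= dist x x' + dist y y';
  smul_lip : forall x y x' y', dist (smul x y) (smul x' y') <= dist x x' + dist y y';
  smeet_lip : forall x y x' y', dist (smeet x y) (smeet x' y') <= dist x x' + dist y y';
  sjoin_lip : forall x y x' y', dist (sjoin x y) (sjoin x' y') <= dist x x' + dist y y'
}.

Definition upd (T : Type) (e : nat -> T) (n : nat) (m : T) : nat -> T :=
  fun k => if k == n then m else e k.

Inductive term :=
  | TVar of nat | TZero | TOne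
  | TAdd of term & term | TMul of term & term
  | TMeet of term & term | TJoin of term & term.

Inductive aform (R : Type) :=
  | AOne
  | ADist of term & term
  | AAdd of aform R & aform R
  | AScale of R & aform R
  | ASup of nat & aform R
  | AInf of nat & aform R.
Arguments AOne {R}.
Arguments ADist {R}.

Fixpoint teval (R : realType) (M : LStr R) (e : nat -> M) (t : term) : M :=
  match t with
  | TVar n => e n
  | TZero => szero M
  | TOne => sone M
  | TAdd a b => sadd (teval e a) (teval e b)
  | TMul a b => smul (teval e a) (teval e b)
  | TMeet a b => smeet (teval e a) (teval e b)
  | TJoin a b => sjoin (teval e a) (teval e b)
  end.

Fixpoint aeval (R : realType) (M : LStr R) (e : nat -> M) (f : aform R) : R :=
  match f with
  | AOne => 1
  | ADist a b => dist (teval e a) (teval e b)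
  | AAdd f g => aeval e f + aeval e g
  | AScale r f => r * aeval e f
  | ASup n f => sup [set aeval (upd e n m) f | m in [set: car M]]
  | AInf n f => inf [set aeval (upd e n m) f | m in [set: car M]]
  end.

Fixpoint tfree (n : nat) (t : term) : bool :=
  match t with
  | TVar k => k == n
  | TZero | TOne => false
  | TAdd a b | TMul a b | TMeet a b | TJoin a b => tfree n a || tfree n b
  end.

Fixpoint afree (R : Type) (n : nat) (f : aform R) : bool :=
  match f with
  | AOne => false
  | ADist a b => tfree n a || tfree n b
  | AAdd f g => afree n f || afree n g
  | AScale _ f => afree n f
  | ASup k f | AInf k f => (n != k) && afree n f
  end.

Definition closed_aform (R : Type) (f : aform R) := forall n, ~~ afree n f.

Inductive pterm :=
  | PVar of nat | PZero | POne | PAdd of pterm & pterm | PMul of pterm & pterm.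

Inductive pform :=
  | PEq of pterm & pterm
  | PBot
  | PImp of pform & pform
  | PAll of nat & pform.

Fixpoint pteval (R : realType) (M : LStr R) (e : nat -> M) (t : pterm) : M :=
  match t with
  | PVar n => e n
  | PZero => szero M
  | POne => sone M
  | PAdd a b => sadd (pteval e a) (pteval e b)
  | PMul a b => smul (pteval e a) (pteval e b)
  end.

Fixpoint psat (R : realType) (M : LStr R) (e : nat -> M) (f : pform) : Prop :=
  match f with
  | PEq a b => pteval e a = pteval e b
  | PBot => False
  | PImp f g => psat e f -> psat e g
  | PAll n f => forall m : M, psat (upd e n m) f
  end.

(* An L-structure which is a model of first-order PA (reduct to +,*,0,1),
   with discrete metric and meet/join = min/max for the PA order. *)
Definition PA_axioms (R : realType) (N : LStr R) : Prop :=
  (forall x : N, sadd x (sone N) <> szero N) /\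
  (forall x y : N, sadd x (sone N) = sadd y (sone N) -> x = y) /\
  (forall x : N, sadd x (szero N) = x) /\
  (forall x y : N, sadd x (sadd y (sone N)) = sadd (sadd x y) (sone N)) /\
  (forall x : N, smul x (szero N) = szero N) /\
  (forall x y : N, smul x (sadd y (sone N)) = sadd (smul x y) x) /\
  (forall (f : pform) (n : nat) (e : nat -> N),
      psat (upd e n (szero N)) f ->
      (forall m : N, psat (upd e n m) f -> psat (upd e n (sadd m (sone N))) f) ->
      forall m : N, psat (upd e n m) f).

Definition PA_model (R : realType) (N : LStr R) : Prop :=
  [/\ PA_axioms N,
      (forall x y : N, x <> y -> dist x y = 1),
      (forall x y : N, (exists z, sadd x z = y) -> smeet x y = x /\ sjoin x y = y) &
      (forall x y : N, ~ (exists z, sadd x z = y) -> smeet x y = y /\ sjoin x y = x)].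

(* M |= AA : M satisfies every closed affine condition (phi >= 0, phi a
   closed affine formula) that holds in every model of PA. *)
Definition models_AA (R : realType) (M : LStr R) : Prop :=
  forall f : aform R, closed_aform f ->
    (forall N : LStr R, PA_model N -> 0 <= aeval (fun _ => szero N) f) ->
    0 <= aeval (fun _ => szero M) f.

Definition sle (R : realType) (M : LStr R) (x y : M) := smeet x y = x.
Definition slt (R : realType) (M : LStr R) (x y : M) := sle x y /\ x <> y.

Definition is_cut (R : realType) (M : LStr R) (I : set M) :=
  [/\ exists x, I x,
      (forall x y, sle x y -> I y -> I x) &
      (forall x, I x -> I (sadd x (sone M)))].

Definition proper_cut (R : realType) (M : LStr R) (I : set M) :=
  is_cut I /\ I <> [set: car M].

Definition dist_set (R : realType) (M : LStr R) (x : M) (D : set M) : R :=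
  inf [set dist x y | y in D].

Definition closed_set (R : realType) (M : LStr R) (D : set M) :=
  forall x, (forall eps : R, 0 < eps -> exists2 y, D y & dist x y < eps) -> D x.

(* D is closed and d(x,D) = phi^M(x, params) for some affine formula phi,
   with x as variable 0 and parameters given by an assignment e. *)
Definition formula_definable (R : realType) (M : LStr R) (D : set M) :=
  closed_set D /\
  exists (f : aform R) (e : nat -> M), forall x, aeval (upd e 0 x) f = dist_set x D.

Definition eps_nbhd (R : realType) (M : LStr R) (D : set M) (eps : R) : set M :=
  [set x | dist_set x D < eps].

From HB Require Import structures.
From mathcomp Require Import all_boot all_order all_algebra.
From mathcomp Require Import boolp classical_sets reals.
From mathcomp Require Import zify lra.
Set Implicit Arguments. Unset Strict Implicit. Unset Printing Implicit Defensive.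
Import Order.TTheory GRing.Theory Num.Theory.
Local Open Scope classical_set_scope.
Local Open Scope ring_scope.

(* Suppose every v outside I below b had d(v, D) >= eps.  Choose b' outside I,
   b' <= b, at which d(., D) is within kappa * eps / 2 of its infimum s >= eps
   over such v, and let rho y be the infimum of d(., D) over [y, b'].

   In a model of PA the metric is discrete, so the formula phi defining
   d(., D) takes finitely many values, with minimal gap g0.  If rho u < rho b
   for some u <= b, induction finds c < b at which rho jumps by at least g0;
   with kappa = g0 / (2 B + 1), B a bound for |phi|, every model of PA thus
   satisfies the affine inequality
     inf_c (rho (c ⊓ b) - rho (c ⊓ b ⊕ 1)) <= kappa * (rho u - rho b),
   and so does M.  In M take u in I; then rho u = 0 as D is cofinal in I, and
   rho b' >= s, so the right side is at most - kappa * eps.  But a step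
   rho (c ⊓ b') - rho (c ⊓ b' ⊕ 1) is nonnegative if c ⊓ b' lies in I (then
   so does c ⊓ b' ⊕ 1, and rho vanishes there), and exceeds - kappa * eps / 2
   otherwise, since then rho (c ⊓ b') >= s > d(b', D) - kappa * eps / 2 while
   rho (c ⊓ b' ⊕ 1) <= d(b', D). *)

Local Notation "x ⊕ y" := (sadd x y) (at level 50, left associativity).
Local Notation "x ⊓ y" := (smeet x y) (at level 40, left associativity).
Local Notation "x ⊔ y" := (sjoin x y) (at level 40, left associativity).
Local Notation ssucc x := (sadd x (sone _)).

Section FiniteExtrema.
Variable R : realType.
Implicit Types (S : set R) (V : seq R).

Lemma sup_max S x : S x -> ubound S x -> sup S = x.
Proof.
move=> Sx ubx; apply/le_anti/andP; split; first by apply: ge_sup => //; exists x.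
by apply: ub_le_sup => //; exists x.
Qed.

Lemma inf_min S x : S x -> lbound S x -> inf S = x.
Proof.
move=> Sx lbx; apply/le_anti/andP; split; last by apply: lb_le_inf => //; exists x.
by apply: ge_inf => //; exists x.
Qed.

Lemma norm_sup_le S B : S !=set0 -> (forall y, S y -> `|y| <= B) -> `|sup S| <= B.
Proof.
move=> [y Sy] SB; have ubB : ubound S B by move=> z /SB /ler_normlW.
rewrite ler_norml ge_sup ?andbT //; last by exists y.
apply: le_trans (ub_le_sup (ex_intro _ B ubB) Sy).
by have := SB _ Sy; rewrite ler_norml => /andP[].
Qed.

Lemma norm_inf_le S B : S !=set0 -> (forall y, S y -> `|y| <= B) -> `|inf S| <= B.
Proof.
move=> [y Sy] SB; rewrite normrN; apply: norm_sup_le; first by exists (- y), y.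
by move=> _ [z Sz <-]; rewrite normrN SB.
Qed.

Lemma finite_min S V : S !=set0 -> (forall y, S y -> y \in V) ->
  exists2 x, S x & lbound S x.
Proof.
move=> [y Sy] SV; exists (\big[Order.min/y]_(x <- V | `[< S x >]) x).
  apply: (big_ind S) => // [a b Sa Sb|x /asboolP//].
  by rewrite minEle; case: ifP.
by move=> x Sx; apply: ge_bigmin_seq (SV _ Sx) _; apply/asboolP.
Qed.

Lemma finite_max S V : S !=set0 -> (forall y, S y -> y \in V) ->
  exists2 x, S x & ubound S x.
Proof.
move=> [y Sy] SV; exists (\big[Order.max/y]_(x <- V | `[< S x >]) x).
  apply: (big_ind S) => // [a b Sa Sb|x /asboolP//].
  by rewrite maxEle; case: ifP.
by move=> x Sx; apply: le_bigmax_seq (SV _ Sx) _; apply/asboolP.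
Qed.

Lemma finite_sup_attained (T : Type) (g : T -> R) V : inhabited T ->
  (forall t, g t \in V) -> exists t, sup (range g) = g t /\ forall t', g t' <= g t.
Proof.
move=> [t0] gV; have [_ [t _ <-] ubt] : exists2 x, range g x & ubound (range g) x.
  by apply: (finite_max (V := V)); [exists (g t0), t0|move=> _ [t _ <-]].
have ubt' t' : g t' <= g t by apply: ubt; exists t'.
by exists t; split=> //; apply: sup_max => //; exists t.
Qed.

Lemma finite_inf_attained (T : Type) (g : T -> R) V : inhabited T ->
  (forall t, g t \in V) -> exists t, inf (range g) = g t /\ forall t', g t <= g t'.
Proof.
move=> [t0] gV; have [_ [t _ <-] lbt] : exists2 x, range g x & lbound (range g) x.
  by apply: (finite_min (V := V)); [exists (g t0), t0|move=> _ [t _ <-]].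
have lbt' t' : g t <= g t' by apply: lbt; exists t'.
by exists t; split=> //; apply: inf_min => //; exists t.
Qed.

Lemma finite_supP (T : Type) (g : T -> R) V (P : R -> Prop) : inhabited T ->
  (forall t, g t \in V) ->
  P (sup (range g)) <-> exists2 v, v \in V & P v /\ (exists t, g t = v) /\ (forall t, g t <= v).
Proof.
move=> T0 gV; have [t [supE ubt]] := finite_sup_attained T0 gV.
split=> [|[v _ [Pv [[t' vE] ub]]]].
  by rewrite supE => Pg; exists (g t); last by split; [|split; [exists t|]].
by subst v; rewrite (@sup_max _ (g t')) // => _ [t'' _ <-].
Qed.

Lemma finite_infP (T : Type) (g : T -> R) V (P : R -> Prop) : inhabited T ->
  (forall t, g t \in V) ->
  P (inf (range g)) <-> exists2 v, v \in V & P v /\ (exists t, g t = v) /\ (forall t, v <= g t).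
Proof.
move=> T0 gV; have [t [infE lbt]] := finite_inf_attained T0 gV.
split=> [|[v _ [Pv [[t' vE] lb]]]].
  by rewrite infE => Pg; exists (g t); last by split; [|split; [exists t|]].
by subst v; rewrite (@inf_min _ (g t')) // => _ [t'' _ <-].
Qed.

Lemma exists_gap V : exists2 g : R, 0 < g &
  forall p q, p \in V -> q \in V -> p != q -> g <= `|p - q|.
Proof.
exists (\big[Order.min/1]_(p <- V) \big[Order.min/1]_(q <- V | q != p) `|p - q|).
  apply: (big_ind (fun x => 0 < x)) => // [a b a0 b0|p _]; first by rewrite lt_min a0.
  apply: (big_ind (fun x => 0 < x)) => // [a b a0 b0|q qp]; first by rewrite lt_min a0.
  by rewrite normr_gt0 subr_eq0 eq_sym.
move=> p q pV qV pq; apply: (bigmin_inf_seq _ _ _ _ _ pV) => //.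
by apply: (bigmin_inf_seq _ _ _ _ _ qV) => //; rewrite eq_sym.
Qed.

End FiniteExtrema.

Fixpoint tmax (t : term) : nat :=
  match t with
  | TVar n => n
  | TZero | TOne => 0
  | TAdd a b | TMul a b | TMeet a b | TJoin a b => maxn (tmax a) (tmax b)
  end.

Fixpoint amax (R : Type) (f : aform R) : nat :=
  match f with
  | AOne => 0
  | ADist a b => maxn (tmax a) (tmax b)
  | AAdd f g => maxn (amax f) (amax g)
  | AScale _ f => amax f
  | ASup n f | AInf n f => maxn n (amax f)
  end.

Fixpoint abnd (R : realType) (f : aform R) : R :=
  match f with
  | AOne | ADist _ _ => 1
  | AAdd f g => abnd f + abnd g
  | AScale r f => `|r| * abnd f
  | ASup _ f | AInf _ f => abnd f
  end.

Definition ASub (R : realType) (f g : aform R) := AAdd f (AScale (-1) g).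

Lemma tfree_tmax n t : tfree n t -> (n <= tmax t)%N.
Proof.
elim: t => [k|||a IHa b IHb|a IHa b IHb|a IHa b IHb|a IHa b IHb] //=;
  first by move=> /eqP ->.
all: by move=> /orP[/IHa|/IHb] h; rewrite leq_max h ?orbT.
Qed.

Lemma afree_amax (R : Type) n (f : aform R) : afree n f -> (n <= amax f)%N.
Proof.
elim: f => [|a b|f IHf g IHg|r f IHf|k f IHf|k f IHf] //=.
- by move=> /orP[|] /tfree_tmax h; rewrite leq_max h ?orbT.
- by move=> /orP[/IHf|/IHg] h; rewrite leq_max h ?orbT.
- by move=> /andP[_ /IHf h]; rewrite leq_max h orbT.
- by move=> /andP[_ /IHf h]; rewrite leq_max h orbT.
Qed.

Lemma abnd_ge0 (R : realType) (f : aform R) : 0 <= abnd f.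
Proof. by elim: f => //= [f + g|r f]; [exact: addr_ge0|exact: mulr_ge0]. Qed.

Section Evaluation.
Variables (R : realType) (M : LStr R).
Implicit Types (e : nat -> M) (f : aform R).

Lemma upd_same e n m : upd e n m n = m.
Proof. by rewrite /upd eqxx. Qed.

Lemma upd_other e n m k : k <> n -> upd e n m k = e k.
Proof. by rewrite /upd => /eqP/negbTE ->. Qed.

Lemma eq_teval e e' t : (forall k, tfree k t -> e k = e' k) -> teval e t = teval e' t.
Proof.
elim: t => [n|||a IHa b IHb|a IHa b IHb|a IHa b IHb|a IHa b IHb] //= ee';
  first by apply: ee'; rewrite /= eqxx.
all: by rewrite IHa ?IHb // => k hk; apply: ee'; rewrite /= hk ?orbT.
Qed.

Lemma eq_aeval e e' f : (forall k, afree k f -> e k = e' k) -> aeval e f = aeval e' f.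
Proof.
elim: f e e' => [|a b|f IHf g IHg|r f IHf|n f IHf|n f IHf] e e' //= ee'.
- by rewrite (@eq_teval e e' a) ?(@eq_teval e e' b) // => k hk; apply: ee'; rewrite hk ?orbT.
- by rewrite (IHf e e') ?(IHg e e') // => k hk; apply: ee'; rewrite hk ?orbT.
- by rewrite (IHf e e').
- congr sup; congr image; apply: funext => m; apply: IHf => k hk.
  by rewrite /upd; case: eqP => // /eqP kn; apply: ee'; rewrite kn hk.
- congr inf; congr image; apply: funext => m; apply: IHf => k hk.
  by rewrite /upd; case: eqP => // /eqP kn; apply: ee'; rewrite kn hk.
Qed.

Lemma teval_upd_fresh e k m t : (tmax t < k)%N -> teval (upd e k m) t = teval e t.
Proof.
move=> tk; apply: eq_teval => j /tfree_tmax jt; apply: upd_other => jk.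
by move: tk; rewrite -jk ltnNge jt.
Qed.

Lemma aeval_AScale e r f : aeval e (AScale r f) = r * aeval e f.
Proof. by []. Qed.

Lemma aeval_ASub e f g : aeval e (ASub f g) = aeval e f - aeval e g.
Proof. by rewrite /= mulN1r. Qed.

Lemma aeval_bnd e f : `|aeval e f| <= abnd f.
Proof.
elim: f e => [|a b|f IHf g IHg|r f IHf|n f IHf|n f IHf] e /=.
- by rewrite normr1.
- by rewrite ger0_norm ?dist_ge0 ?dist_le1.
- exact: le_trans (ler_normD _ _) (lerD (IHf e) (IHg e)).
- by rewrite normrM ler_wpM2l.
- by apply: norm_sup_le => [|_ [m _ <-]]; [exists (aeval (upd e n (szero M)) f), (szero M)|].
- by apply: norm_inf_le => [|_ [m _ <-]]; [exists (aeval (upd e n (szero M)) f), (szero M)|].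
Qed.

Lemma aeval_AInf e n f : aeval e (AInf n f) = inf (range (fun m => aeval (upd e n m) f)).
Proof. by []. Qed.

Lemma aeval_AInf_le e n f m : aeval e (AInf n f) <= aeval (upd e n m) f.
Proof.
apply: ge_inf; last by exists m.
by exists (- abnd f) => _ [m' _ <-]; have := aeval_bnd (upd e n m') f; rewrite ler_norml => /andP[].
Qed.

Lemma lb_le_aeval_AInf e n f x :
  (forall m, x <= aeval (upd e n m) f) -> x <= aeval e (AInf n f).
Proof.
move=> lbx; apply: lb_le_inf => [|_ [m _ <-]] //.
by exists (aeval (upd e n (szero M)) f), (szero M).
Qed.

Lemma aeval_foldr_AInf_le l e0 e f :
  aeval e0 (foldr (@AInf R) f l) <= aeval (fun k => if k \in l then e k else e0 k) f.
Proof.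
elim: l e0 => [|k l IHl] e0 //=; apply: le_trans (aeval_AInf_le _ _ _ (e k)) _.
apply: le_trans (IHl _) _.
rewrite (eq_aeval (e' := fun j => if j \in k :: l then e j else e0 j)) // => j _.
by rewrite in_cons /upd; case: (j =P k) => [->|]; case: (_ \in l).
Qed.

Lemma aeval_foldr_AInf_ge0 l e0 f : (forall e, 0 <= aeval e f) ->
  0 <= aeval e0 (foldr (@AInf R) f l).
Proof.
move=> f_ge0; elim: l e0 => [|k l IHl] e0 //=.
exact: lb_le_aeval_AInf.
Qed.

End Evaluation.

Definition aclose (R : Type) (f : aform R) := foldr (@AInf R) f (iota 0 (amax f).+1).

Lemma afree_foldr_AInf (R : Type) n l (f : aform R) :
  afree n (foldr (@AInf R) f l) = (n \notin l) && afree n f.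
Proof. by elim: l => [|k l IHl] //=; rewrite IHl in_cons negb_or andbA. Qed.

Lemma aclose_closed (R : Type) (f : aform R) : closed_aform (aclose f).
Proof.
move=> n; rewrite afree_foldr_AInf mem_iota /= add0n ltnS.
by apply/negP => /andP[/negP + /afree_amax]; apply.
Qed.

Lemma AA_transfer (R : realType) (M : LStr R) (f : aform R) : models_AA M ->
  (forall N : LStr R, PA_model N -> forall e : nat -> N, 0 <= aeval e f) ->
  forall e : nat -> M, 0 <= aeval e f.
Proof.
move=> AA f_ge0 e.
have := AA _ (aclose_closed f) (fun N HN => aeval_foldr_AInf_ge0 _ _ (f_ge0 N HN)).
move/le_trans; apply; apply: le_trans (aeval_foldr_AInf_le _ _ e _) _.
rewrite (eq_aeval (e' := e)) // => k /afree_amax kf.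
by rewrite mem_iota /= add0n ltnS kf.
Qed.

Lemma AA_transfer_teq (R : realType) (M : LStr R) (s t : term) : models_AA M ->
  (forall N : LStr R, PA_model N -> forall e : nat -> N, teval e s = teval e t) ->
  forall e : nat -> M, teval e s = teval e t.
Proof.
move=> AA st e; apply: dist_sep; apply/eqP; rewrite eq_le dist_ge0 andbT.
have st0 (N : LStr R) : PA_model N -> forall e' : nat -> N, 0 <= aeval e' (AScale (-1) (ADist s t)).
  by move=> HN e'; rewrite /= (st _ HN) dist_refl mulr0.
by have := AA_transfer AA st0 e; rewrite /= mulN1r oppr_ge0.
Qed.

Definition slattice (R : realType) (M : LStr R) : Prop :=
  [/\ commutative (@smeet R M), associative (@smeet R M), commutative (@sjoin R M),
      (forall x y : M, x ⊓ (x ⊔ y) = x) & (forall x y : M, x ⊔ (x ⊓ y) = x)].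

Section LatticeFacts.
Variables (R : realType) (M : LStr R).
Hypothesis ML : slattice M.
Implicit Types x y z : M.

Lemma smeetC : commutative (@smeet R M). Proof. by case: ML. Qed.
Lemma smeetA : associative (@smeet R M). Proof. by case: ML. Qed.
Lemma sjoinC : commutative (@sjoin R M). Proof. by case: ML. Qed.
Lemma smeetKU x y : x ⊓ (x ⊔ y) = x. Proof. by case: ML. Qed.
Lemma sjoinKI x y : x ⊔ (x ⊓ y) = x. Proof. by case: ML. Qed.

Lemma sle_refl x : sle x x.
Proof. by rewrite /sle -{2}(sjoinKI x x) smeetKU. Qed.

Lemma sle_trans y x z : sle x y -> sle y z -> sle x z.
Proof. by rewrite /sle => xy yz; rewrite -xy -smeetA yz. Qed.

Lemma sle_meetr x y : sle (x ⊓ y) y.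
Proof. by rewrite /sle -smeetA sle_refl. Qed.

Lemma sle_meet z x y : sle z x -> sle z y -> sle z (x ⊓ y).
Proof. by rewrite /sle => zx zy; rewrite smeetA zx. Qed.

Lemma sle_joinl x y : sle x (x ⊔ y).
Proof. exact: smeetKU. Qed.

Lemma sle_joinr x y : sle y (x ⊔ y).
Proof. by rewrite sjoinC; apply: sle_joinl. Qed.

Lemma sle_meet_idr x y : sle y x -> x ⊓ y = y.
Proof. by rewrite /sle smeetC. Qed.

Lemma sle_join_idl x y : sle y x -> x ⊔ y = x.
Proof. by rewrite /sle smeetC => <-; apply: sjoinKI. Qed.

End LatticeFacts.

Definition inf_between (R : realType) (M : LStr R) (F : M -> R) (b y : M) : R :=
  inf [set F ((z ⊔ y) ⊓ b) | z in [set: M]].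

Section InfBetween.
Variables (R : realType) (M : LStr R) (F : M -> R) (b : M).
Implicit Types x y z : M.

Lemma inf_between_le y z : has_lbound (range F) -> inf_between F b y <= F ((z ⊔ y) ⊓ b).
Proof.
move=> [r lbr]; apply: ge_inf; last by exists z.
by exists r => _ [z' _ <-]; apply: lbr; exists ((z' ⊔ y) ⊓ b).
Qed.

Lemma le_inf_between y r : (forall z, r <= F ((z ⊔ y) ⊓ b)) -> r <= inf_between F b y.
Proof. by move=> lbr; apply: lb_le_inf => [|_ [z _ <-]] //; exists (F ((y ⊔ y) ⊓ b)), y. Qed.

Lemma inf_between_const y w : (forall z, (z ⊔ y) ⊓ b = w) -> inf_between F b y = F w.
Proof. by move=> yw; apply: inf_min => [|_ [z _ <-]]; [exists y; rewrite ?yw|rewrite yw]. Qed.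

Hypothesis ML : slattice M.

Lemma inf_between_self : inf_between F b b = F b.
Proof. by apply: inf_between_const => z; apply/sle_meet_idr/sle_joinr. Qed.

Lemma inf_between_le_top y : has_lbound (range F) -> inf_between F b y <= F b.
Proof.
by move=> Fr; rewrite -{2}(sle_meet_idr ML (sle_joinl ML b y)) inf_between_le.
Qed.

Lemma inf_between_mono y y' : has_lbound (range F) -> sle y y' ->
  inf_between F b y <= inf_between F b y'.
Proof.
move=> Fr yy'; apply: le_inf_between => z.
rewrite -(sle_join_idl ML (sle_trans ML yy' (sle_joinr ML z y'))).
exact: inf_between_le.
Qed.

Lemma inf_between_mem (V : seq R) y : (forall x, F x \in V) -> inf_between F b y \in V.
Proof.
move=> FV; rewrite /inf_between.
have [z [-> _]] := finite_inf_attained (inhabits b) (fun z => FV ((z ⊔ y) ⊓ b)).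
exact: FV.
Qed.

End InfBetween.

Section DistSet.
Variables (R : realType) (M : LStr R) (D : set M).
Implicit Types x y : M.

Lemma dist_set_ge0 x : 0 <= dist_set x D.
Proof.
have [->|/set0P [y Dy]] := eqVneq D set0; first by rewrite /dist_set image_set0 inf0.
by apply: lb_le_inf => [|_ [y' _ <-]]; [exists (dist x y), y|exact: dist_ge0].
Qed.

Lemma dist_set_lbound : has_lbound (range (fun x : M => dist_set x D)).
Proof. by exists 0 => _ [x _ <-]; apply: dist_set_ge0. Qed.

Lemma dist_set_mem y : D y -> dist_set y D = 0.
Proof.
by move=> Dy; apply: inf_min => [|_ [y' _ <-]]; [exists y; rewrite ?dist_refl|apply: dist_ge0].
Qed.

Lemma dist_set_lip x p : D !=set0 -> dist_set p D <= dist_set x D + dist x p.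
Proof.
move=> [y Dy]; rewrite -lerBlDr.
apply: lb_le_inf => [|_ [y' Dy' <-]]; first by exists (dist x y), y.
rewrite lerBlDr; apply: le_trans (ge_inf _ (ex_intro2 _ _ y' Dy' erefl)) _.
  by exists 0 => _ [y'' _ <-]; apply: dist_ge0.
by rewrite addrC; apply: le_trans (dist_tri p x y') _; rewrite dist_sym.
Qed.

End DistSet.

(* In a model of PA the metric is discrete, so an affine formula only takes
   values in this finite list (aeval_avalues). *)
Fixpoint avalues (R : realType) (f : aform R) : seq R :=
  match f with
  | AOne => [:: 1]
  | ADist _ _ => [:: 0; 1]
  | AAdd f g => [seq p + q | p <- avalues f, q <- avalues g]
  | AScale r f => map ( *%R r) (avalues f)
  | ASup _ f | AInf _ f => avalues f
  end.

Section PeanoModels.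
Variables (R : realType) (N : LStr R).
Hypothesis HN : PA_model N.
Local Notation env := (nat -> N).
Local Notation O := (szero N).
Implicit Types (x y z : N) (e : env).

Definition pdef (P : env -> Prop) := exists f, forall e, psat e f <-> P e.

Lemma pdef_ext (P Q : env -> Prop) : (forall e, P e <-> Q e) -> pdef P -> pdef Q.
Proof. by move=> PQ [f Pf]; exists f => e; rewrite Pf PQ. Qed.

Lemma pdef_eq s t : pdef (fun e => pteval e s = pteval e t).
Proof. by exists (PEq s t). Qed.

Lemma pdef_const (P : Prop) : pdef (fun _ => P).
Proof.
have [p|np] := pselect P; first by exists (PImp PBot PBot) => e /=; split.
by exists PBot => e /=; split.
Qed.

Lemma pdef_imp P Q : pdef P -> pdef Q -> pdef (fun e => P e -> Q e).
Proof. by move=> [f Pf] [g Qg]; exists (PImp f g) => e /=; rewrite Pf Qg. Qed.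

Lemma pdef_not P : pdef P -> pdef (fun e => ~ P e).
Proof. by move=> [f Pf]; exists (PImp f PBot) => e /=; rewrite Pf. Qed.

Lemma pdef_and P Q : pdef P -> pdef Q -> pdef (fun e => P e /\ Q e).
Proof.
move=> dP dQ; apply: pdef_ext (pdef_not (pdef_imp dP (pdef_not dQ))) => e.
by split=> [|[p q] /(_ p)//]; case: (pselect (P e)); case: (pselect (Q e)); tauto.
Qed.

Lemma pdef_or P Q : pdef P -> pdef Q -> pdef (fun e => P e \/ Q e).
Proof.
move=> dP dQ; apply: pdef_ext (pdef_imp (pdef_not dP) dQ) => e.
by case: (pselect (P e)); tauto.
Qed.

Lemma pdef_all n P : pdef P -> pdef (fun e => forall m, P (upd e n m)).
Proof. by move=> [f Pf]; exists (PAll n f) => e /=; split=> Pe m; apply/Pf. Qed.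

Lemma pdef_ex n P : pdef P -> pdef (fun e => exists m, P (upd e n m)).
Proof.
move=> dP; apply: pdef_ext (pdef_not (pdef_all n (pdef_not dP))) => e.
by split=> [|[m Pm] /(_ m)//]; apply: contra_notP => /forallNP.
Qed.

Lemma pdef_has (T : eqType) (s : seq T) (Q : T -> env -> Prop) :
  (forall a, pdef (Q a)) -> pdef (fun e => exists2 a, a \in s & Q a e).
Proof.
move=> dQ; elim: s => [|a s IHs].
  by apply: pdef_ext (pdef_const False) => e; split=> // -[].
apply: pdef_ext (pdef_or (dQ a) IHs) => e; split=> [[Qa|[b bs Qb]]|[b]].
- by exists a; rewrite ?mem_head.
- by exists b; rewrite // in_cons bs orbT.
- by rewrite in_cons => /orP[/eqP->|bs] Qb; [left|right; exists b].
Qed.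

Lemma pdef_ind P n e : pdef P -> P (upd e n O) ->
  (forall m, P (upd e n m) -> P (upd e n (ssucc m))) -> forall m, P (upd e n m).
Proof.
case: HN => [[_ [_ [_ [_ [_ [_ ind]]]]]] _ _ _] [f Pf] P0 PS m.
apply/Pf; apply: ind => [|m' /Pf /PS]; first exact/Pf.
by move/Pf.
Qed.

Lemma pdef_jump P n e m : pdef P -> P (upd e n O) -> ~ P (upd e n m) ->
  exists c, P (upd e n c) /\ ~ P (upd e n (ssucc c)).
Proof.
move=> dP P0 nPm; apply: contrapT => nojump; apply/nPm/(pdef_ind dP P0) => c Pc.
by apply: contrapT => nPc; apply: nojump; exists c.
Qed.

Lemma succ_neq0 x : ssucc x <> O.
Proof. by case: HN => -[h _] _ _ _; apply: h. Qed.

Lemma succ_inj x y : ssucc x = ssucc y -> x = y.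
Proof. by case: HN => -[_ [h _]] _ _ _; apply: h. Qed.

Lemma saddr0 x : x ⊕ O = x.
Proof. by case: HN => -[_ [_ [h _]]] _ _ _; apply: h. Qed.

Lemma saddrS x y : x ⊕ ssucc y = ssucc (x ⊕ y).
Proof. by case: HN => -[_ [_ [_ [h _]]]] _ _ _; apply: h. Qed.

Lemma sadd0r x : O ⊕ x = x.
Proof.
have := pdef_ind (n := 0) (e := fun _ => O) (pdef_eq (PAdd PZero (PVar 0)) (PVar 0)).
rewrite /upd /=; apply; first exact: saddr0.
by move=> m IHm; rewrite saddrS IHm.
Qed.

Lemma saddSr x y : ssucc x ⊕ y = ssucc (x ⊕ y).
Proof.
have := pdef_ind (n := 0) (e := fun _ => x)
  (pdef_eq (PAdd (PAdd (PVar 1) POne) (PVar 0)) (PAdd (PAdd (PVar 1) (PVar 0)) POne)).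
rewrite /upd /=; apply; first by rewrite !saddr0.
by move=> m IHm; rewrite !saddrS IHm.
Qed.

Lemma saddrA x y z : x ⊕ (y ⊕ z) = x ⊕ y ⊕ z.
Proof.
have := pdef_ind (n := 0) (e := fun k => if k == 1 then x else y)
  (pdef_eq (PAdd (PVar 1) (PAdd (PVar 2) (PVar 0))) (PAdd (PAdd (PVar 1) (PVar 2)) (PVar 0))).
rewrite /upd /=; apply; first by rewrite !saddr0.
by move=> m IHm; rewrite !saddrS IHm.
Qed.

Lemma szero_or_succ x : x = O \/ exists y, x = ssucc y.
Proof.
have := pdef_ind (n := 0) (e := fun _ => O) (pdef_or (pdef_eq (PVar 0) PZero)
  (pdef_ex 1 (pdef_eq (PVar 0) (PAdd (PVar 1) POne)))).
rewrite /upd /=; apply; first by left.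
by move=> m _; right; exists m.
Qed.

Lemma sadd_id_eq0 x w : x ⊕ w = x -> w = O.
Proof.
have := pdef_ind (n := 0) (e := fun _ => w)
  (pdef_imp (pdef_eq (PAdd (PVar 0) (PVar 1)) (PVar 0)) (pdef_eq (PVar 1) PZero)).
rewrite /upd /=; apply; first by rewrite sadd0r.
by move=> m IHm; rewrite saddSr => /succ_inj.
Qed.

Lemma sadd_eq0l x y : x ⊕ y = O -> x = O.
Proof.
by case: (szero_or_succ y) => [->|[z ->]]; rewrite ?saddr0 // saddrS => /succ_neq0.
Qed.

Definition ple x y := exists z, x ⊕ z = y.

Lemma ple_refl x : ple x x.
Proof. by exists O; rewrite saddr0. Qed.

Lemma ple_trans y x z : ple x y -> ple y z -> ple x z.
Proof. by move=> [a <-] [b <-]; exists (a ⊕ b); rewrite saddrA. Qed.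

Lemma ple_anti x y : ple x y -> ple y x -> x = y.
Proof.
move=> [a xa] [b yb]; move: (yb); rewrite -xa -saddrA => /sadd_id_eq0/sadd_eq0l a0.
by rewrite a0 saddr0.
Qed.

Lemma ple_succ x : ple x (ssucc x).
Proof. by exists (sone N). Qed.

Lemma nple_succ x : ~ ple (ssucc x) x.
Proof.
move=> Sxx; have /sadd_id_eq0 := ple_anti Sxx (ple_succ x).
by rewrite -(sadd0r (sone N)); apply: succ_neq0.
Qed.

Lemma pdef_ple i j : pdef (fun e => ple (e i) (e j)).
Proof.
set k := (maxn i j).+1; have [ik jk] : i <> k /\ j <> k by rewrite /k; lia.
apply: pdef_ext (pdef_ex k (pdef_eq (PAdd (PVar i) (PVar k)) (PVar j))) => e /=.
by split=> -[m]; rewrite /= ?upd_same ?upd_other // => h; exists m; rewrite ?upd_same ?upd_other.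
Qed.

Lemma ple_total x y : ple x y \/ ple y x.
Proof.
have := pdef_ind (n := 0) (e := fun _ => x) (pdef_or (pdef_ple 1 0) (pdef_ple 0 1)).
rewrite /upd /=; apply; first by right; exists x; rewrite sadd0r.
move=> m [mx|[z xz]]; first by left; apply: ple_trans mx (ple_succ m).
case: (szero_or_succ z) => [z0|[w zw]]; first by left; exists (sone N); rewrite -xz z0 saddr0.
by right; exists w; rewrite saddSr -saddrS -zw.
Qed.

Lemma pmeet_cases x y : (ple x y /\ x ⊓ y = x) \/ (ple y x /\ x ⊓ y = y).
Proof.
case: HN => _ _ le_mj nle_mj; have [xy|nxy] := pselect (ple x y).
  by left; split=> //; case: (le_mj _ _ xy).
by right; split; [case: (ple_total x y)|case: (nle_mj _ _ nxy)].
Qed.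

Lemma pjoin_cases x y : (ple x y /\ x ⊔ y = y) \/ (ple y x /\ x ⊔ y = x).
Proof.
case: HN => _ _ le_mj nle_mj; have [xy|nxy] := pselect (ple x y).
  by left; split=> //; case: (le_mj _ _ xy).
by right; split; [case: (ple_total x y)|case: (nle_mj _ _ nxy)].
Qed.

Lemma ple_meetl x y : ple (x ⊓ y) x.
Proof. by case: (pmeet_cases x y) => -[xy ->] //; apply: ple_refl. Qed.

Lemma ple_meetr x y : ple (x ⊓ y) y.
Proof. by case: (pmeet_cases x y) => -[xy ->] //; apply: ple_refl. Qed.

Lemma ple_meet z x y : ple z x -> ple z y -> ple z (x ⊓ y).
Proof. by case: (pmeet_cases x y) => -[_ ->]. Qed.

Lemma ple_joinl x y : ple x (x ⊔ y).
Proof. by case: (pjoin_cases x y) => -[xy ->] //; apply: ple_refl. Qed.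

Lemma ple_joinr x y : ple y (x ⊔ y).
Proof. by case: (pjoin_cases x y) => -[xy ->] //; apply: ple_refl. Qed.

Lemma ple_join z x y : ple x z -> ple y z -> ple (x ⊔ y) z.
Proof. by case: (pjoin_cases x y) => -[_ ->]. Qed.

Lemma slattice_PA : slattice N.
Proof.
split=> [x y|x y z|x y|x y|x y]; apply: ple_anti.
- by apply: ple_meet; [apply: ple_meetr|apply: ple_meetl].
- by apply: ple_meet; [apply: ple_meetr|apply: ple_meetl].
- apply: ple_meet.
    exact: ple_meet (ple_meetl _ _) (ple_trans (ple_meetr _ _) (ple_meetl _ _)).
  exact: ple_trans (ple_meetr _ _) (ple_meetr _ _).
- apply: ple_meet; first exact: ple_trans (ple_meetl _ _) (ple_meetl _ _).
  exact: ple_meet (ple_trans (ple_meetl _ _) (ple_meetr _ _)) (ple_meetr _ _).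
- by apply: ple_join; [apply: ple_joinr|apply: ple_joinl].
- by apply: ple_join; [apply: ple_joinr|apply: ple_joinl].
- exact: ple_meetl.
- by apply: ple_meet; [apply: ple_refl|apply: ple_joinl].
- by apply: ple_join; [apply: ple_refl|apply: ple_meetl].
- exact: ple_joinl.
Qed.

Lemma sleP x y : sle x y <-> ple x y.
Proof.
split=> [xy|]; first by rewrite -xy; apply: ple_meetr.
by case: (pmeet_cases x y) => -[+ xyE] => [_|yx xy] //; rewrite /sle xyE (ple_anti yx xy).
Qed.

Lemma sle_succ x : sle x (ssucc x).
Proof. exact/sleP/ple_succ. Qed.

Lemma nsle_succ x : ~ sle (ssucc x) x.
Proof. by move/sleP; apply: nple_succ. Qed.

Lemma nsle_meet x y : ~ sle x y -> x ⊓ y = y.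
Proof. by case: (pmeet_cases x y) => -[/sleP xy ->]. Qed.

Lemma pdef_meet i j k : pdef (fun e => e i ⊓ e j = e k).
Proof.
apply: pdef_ext (pdef_or (pdef_and (pdef_ple i j) (pdef_eq (PVar i) (PVar k)))
  (pdef_and (pdef_not (pdef_ple i j)) (pdef_eq (PVar j) (PVar k)))) => e /=.
case: HN => _ _ le_mj nle_mj; have [ij|nij] := pselect (ple (e i) (e j)).
  by case: (le_mj _ _ ij) => ->; tauto.
by case: (nle_mj _ _ nij) => ->; tauto.
Qed.

Lemma pdef_join i j k : pdef (fun e => e i ⊔ e j = e k).
Proof.
apply: pdef_ext (pdef_or (pdef_and (pdef_ple i j) (pdef_eq (PVar j) (PVar k)))
  (pdef_and (pdef_not (pdef_ple i j)) (pdef_eq (PVar i) (PVar k)))) => e /=.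
case: HN => _ _ le_mj nle_mj; have [ij|nij] := pselect (ple (e i) (e j)).
  by case: (le_mj _ _ ij) => _ ->; tauto.
by case: (nle_mj _ _ nij) => _ ->; tauto.
Qed.

Lemma pdef_bin (op : N -> N -> N) a b j :
  (forall k, pdef (fun e => teval e a = e k)) ->
  (forall k, pdef (fun e => teval e b = e k)) ->
  (forall i1 i2 k, pdef (fun e => op (e i1) (e i2) = e k)) ->
  pdef (fun e => op (teval e a) (teval e b) = e j).
Proof.
move=> da db dop; set k1 := (maxn (maxn (tmax a) (tmax b)) j).+1; set k2 := k1.+1.
apply: pdef_ext
  (pdef_ex k1 (pdef_ex k2 (pdef_and (da k1) (pdef_and (db k2) (dop k1 k2 j))))) => e.
have [ak bk jk] : [/\ (tmax a < k1)%N, (tmax b < k1)%N & j <> k1] by rewrite /k1; split; lia.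
have fresh m1 m2 t : (tmax t < k1)%N -> teval (upd (upd e k1 m1) k2 m2) t = teval e t.
  by move=> tk; rewrite !teval_upd_fresh //; apply: ltn_trans tk _.
have e'k1 m1 m2 : upd (upd e k1 m1) k2 m2 k1 = m1 by rewrite upd_other ?upd_same //; lia.
have e'j m1 m2 : upd (upd e k1 m1) k2 m2 j = e j by rewrite !upd_other //; lia.
split=> [[m1 [m2 []]]|abj]; first by rewrite !fresh // e'k1 upd_same e'j => -> [-> ->].
by exists (teval e a), (teval e b); rewrite !fresh // e'k1 upd_same e'j.
Qed.

Lemma pdef_teval t j : pdef (fun e => teval e t = e j).
Proof.
elim: t j => [n|||a IHa b IHb|a IHa b IHb|a IHa b IHb|a IHa b IHb] j /=.
- exact: pdef_eq (PVar n) (PVar j).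
- exact: pdef_eq PZero (PVar j).
- exact: pdef_eq POne (PVar j).
- exact: pdef_bin IHa IHb (fun i1 i2 k => pdef_eq (PAdd (PVar i1) (PVar i2)) (PVar k)).
- exact: pdef_bin IHa IHb (fun i1 i2 k => pdef_eq (PMul (PVar i1) (PVar i2)) (PVar k)).
- exact: pdef_bin IHa IHb pdef_meet.
- exact: pdef_bin IHa IHb pdef_join.
Qed.

Lemma pdef_teq s t : pdef (fun e => teval e s = teval e t).
Proof.
set k := (maxn (tmax s) (tmax t)).+1.
apply: pdef_ext (pdef_ex k (pdef_and (pdef_teval s k) (pdef_teval t k))) => e.
have [sk tk] : (tmax s < k)%N /\ (tmax t < k)%N by rewrite /k; lia.
split=> [[m []]|st]; first by rewrite /= !teval_upd_fresh ?upd_same // => -> ->.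
by exists (teval e t); rewrite /= !teval_upd_fresh ?upd_same.
Qed.

Lemma dist_PA x y : dist x y = if `[< x = y >] then 0 else 1.
Proof.
case: HN => _ disc _ _; case: asboolP => [->|/disc //]; exact: dist_refl.
Qed.

Lemma aeval_avalues e f : aeval e f \in avalues f.
Proof.
elim: f e => [|a b|f IHf g IHg|r f IHf|n f IHf|n f IHf] e /=.
- by rewrite mem_seq1.
- by rewrite dist_PA; case: asboolP; rewrite !inE eqxx ?orbT.
- exact: allpairs_f.
- exact: map_f.
- by have [m [-> _]] := finite_sup_attained (inhabits O) (fun m => IHf (upd e n m)).
- by have [m [-> _]] := finite_inf_attained (inhabits O) (fun m => IHf (upd e n m)).
Qed.

Lemma pdef_aeval f (P : R -> Prop) : pdef (fun e => P (aeval e f)).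
Proof.
elim: f P => [|a b|f IHf g IHg|r f IHf|n f IHf|n f IHf] P /=.
- exact: pdef_const.
- apply: pdef_ext (pdef_or (pdef_and (pdef_teq a b) (pdef_const (P 0)))
    (pdef_and (pdef_not (pdef_teq a b)) (pdef_const (P 1)))) => e.
  by rewrite dist_PA; case: asboolP; tauto.
- apply: pdef_ext (pdef_has (avalues f)
    (fun p => pdef_and (IHf (eq^~ p)) (IHg (fun q => P (p + q))))) => e.
  by split=> [[p _ [-> //]]|Pfg]; exists (aeval e f); rewrite ?aeval_avalues.
- exact: IHf (fun q => P (r * q)).
- apply: pdef_ext (pdef_has (avalues f) (fun v => pdef_and (pdef_const (P v))
    (pdef_and (pdef_ex n (IHf (eq^~ v))) (pdef_all n (IHf (fun q => q <= v)))))) => e.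
  by apply: iff_sym; apply: finite_supP (inhabits O) (fun m => aeval_avalues (upd e n m) f).
- apply: pdef_ext (pdef_has (avalues f) (fun v => pdef_and (pdef_const (P v))
    (pdef_and (pdef_ex n (IHf (eq^~ v))) (pdef_all n (IHf (fun q => v <= q)))))) => e.
  by apply: iff_sym; apply: finite_infP (inhabits O) (fun m => aeval_avalues (upd e n m) f).
Qed.

End PeanoModels.

Section Construction.
Variables (R : realType) (phi : aform R).

(* Variable 0 is the free variable x of phi; the variables below do not occur
   in phi and hold z, c, u, b and the induction counter k. *)
Definition vZ := (amax phi + 1)%N.
Definition vC := (amax phi + 2)%N.
Definition vU := (amax phi + 3)%N.
Definition vB := (amax phi + 4)%N.
Definition vK := (amax phi + 5)%N.

Local Ltac var_lia := unfold vZ, vC, vU, vB, vK in *; lia.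

Definition Kc : R := 2 * abnd phi + 1.

(* Affine formulas cannot substitute (z ⊔ t) ⊓ b for x; the penalty
   Kc * d(x, (z ⊔ t) ⊓ b) does so at the infimum as soon as phi is
   Kc-Lipschitz in x (aeval_rho_form), which holds in PA models because Kc
   exceeds the oscillation of phi, and in M because phi is d(., D) there. *)
Definition rho_form (t : term) : aform R :=
  AInf vZ (AInf 0 (AAdd phi (AScale Kc (ADist (TVar 0) (TMeet (TJoin (TVar vZ) t) (TVar vB)))))).

Definition tCB := TMeet (TVar vC) (TVar vB).

Definition step_form : aform R := AInf vC (ASub (rho_form tCB) (rho_form (TAdd tCB TOne))).

Definition jump_form (kappa : R) : aform R :=
  ASub (AScale kappa (ASub (rho_form (TVar vU)) (rho_form (TVar vB)))) step_form.

Section Semantics.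
Variable M : LStr R.
Implicit Types (e : nat -> M) (x y : M).

Definition phi_at e x := aeval (upd e 0 x) phi.
Definition rho e y := inf_between (phi_at e) (e vB) y.
Definition phi_lip e := forall x p, phi_at e p <= phi_at e x + Kc * dist x p.

Lemma phi_at_upd e k m : (amax phi < k)%N -> phi_at (upd e k m) = phi_at e.
Proof.
move=> phik; apply: funext => x; apply: eq_aeval => j /afree_amax jphi.
by case: (j =P 0) => [->|j0]; rewrite ?upd_same // !upd_other //; lia.
Qed.

Lemma rho_upd e k m : (amax phi < k)%N -> vB <> k -> rho (upd e k m) = rho e.
Proof. by move=> phik Bk; apply: funext => y; rewrite /rho phi_at_upd // upd_other. Qed.

Lemma phi_lip_dist_set (D : set M) e : D !=set0 -> phi_at e = (fun x => dist_set x D) ->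
  phi_lip e.
Proof.
move=> D0 phiE x p; rewrite phiE; apply: le_trans (dist_set_lip x p D0) _.
by rewrite lerD2l ler_peMl ?dist_ge0 // /Kc; have := abnd_ge0 phi; lra.
Qed.

Lemma aeval_rho_form e t : (forall k, tfree k t -> (vZ < k)%N) -> phi_lip e ->
  aeval e (rho_form t) = rho e (teval e t).
Proof.
move=> tZ lip; rewrite aeval_AInf /rho /inf_between; congr inf; congr image.
apply: funext => z; cbv beta; set w := (z ⊔ teval e t) ⊓ e vB.
have bodyE x : aeval (upd (upd e vZ z) 0 x)
    (AAdd phi (AScale Kc (ADist (TVar 0) (TMeet (TJoin (TVar vZ) t) (TVar vB))))) =
    phi_at e x + Kc * dist x w.
  have eZ : upd (upd e vZ z) 0 x vZ = z by rewrite upd_other ?upd_same // /vZ; lia.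
  have eB : upd (upd e vZ z) 0 x vB = e vB by rewrite !upd_other // /vB /vZ; lia.
  rewrite /= eZ eB upd_same (eq_teval (e' := e)) => [|k /tZ Zk]; last first.
    by rewrite !upd_other //; lia.
  by rewrite -/(phi_at (upd e vZ z) x) phi_at_upd // /vZ; lia.
rewrite aeval_AInf; apply: inf_min => [|_ [x _ <-]]; rewrite ?bodyE; last exact: lip.
by exists w => //; rewrite bodyE dist_refl mulr0 addr0.
Qed.

Lemma aeval_step_form e : phi_lip e ->
  aeval e step_form = inf (range (fun c => rho e (c ⊓ e vB) - rho e (ssucc (c ⊓ e vB)))).
Proof.
move=> lip; rewrite aeval_AInf; congr inf; congr image; apply: funext => c; cbv beta.
have [CB phiC] : vB <> vC /\ (amax phi < vC)%N by var_lia.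
have lipC : phi_lip (upd e vC c) by rewrite /phi_lip phi_at_upd.
rewrite aeval_ASub !aeval_rho_form //= ?upd_same ?upd_other // ?rho_upd //.
all: by move=> k /=; rewrite ?orbF => /orP[] /eqP <-; var_lia.
Qed.

Lemma aeval_jump_form e kappa : phi_lip e ->
  aeval e (jump_form kappa) = kappa * (rho e (e vU) - rho e (e vB))
    - inf (range (fun c => rho e (c ⊓ e vB) - rho e (ssucc (c ⊓ e vB)))).
Proof.
move=> lip; rewrite !aeval_ASub aeval_AScale aeval_ASub !aeval_rho_form ?aeval_step_form //.
all: by move=> k /= /eqP <-; var_lia.
Qed.

End Semantics.

Section PeanoSide.
Variable N : LStr R.
Hypothesis HN : PA_model N.
Implicit Types (e : nat -> N) (x y : N).

Lemma phi_lip_PA e : phi_lip e.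
Proof.
move=> x p; rewrite dist_PA //; case: asboolP => [->|_]; first by rewrite mulr0 addr0.
have := aeval_bnd (upd e 0 x) phi; have := aeval_bnd (upd e 0 p) phi.
by rewrite /phi_at /Kc mulr1 !ler_norml => /andP[_ ?] /andP[? _]; lra.
Qed.

Lemma phi_at_lbound e : has_lbound (range (phi_at e)).
Proof.
exists (- abnd phi) => _ [x _ <-].
by have := aeval_bnd (upd e 0 x) phi; rewrite ler_norml => /andP[].
Qed.

Lemma rho_bnd e y : `|rho e y| <= abnd phi.
Proof.
apply: norm_inf_le => [|_ [z _ <-]]; last exact: aeval_bnd.
by exists (phi_at e ((y ⊔ y) ⊓ e vB)), y.
Qed.

Lemma rho_avalues e y : rho e y \in avalues phi.
Proof. exact: inf_between_mem (fun x => aeval_avalues HN _ phi). Qed.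

Lemma rho_out e y : ~ sle y (e vB) -> rho e y = phi_at e (e vB).
Proof.
move=> yB; apply: inf_between_const => z; apply: nsle_meet => // zyB.
exact/yB/(sle_trans (slattice_PA HN) (sle_joinr (slattice_PA HN) z y)).
Qed.

(* A discrete intermediate value theorem, by induction on k along u + k <= b;
   the induction formula expresses rho (u + k) through rho_form. *)
Lemma rho_jump e : sle (e vU) (e vB) -> rho e (e vU) <> rho e (e vB) ->
  exists c, sle (ssucc c) (e vB) /\ rho e c <> rho e (ssucc c).
Proof.
set u := e vU; set b := e vB => ub ubneq.
pose tUK := TAdd (TVar vU) (TVar vK).
pose P e' := sle (teval e' tUK) (e' vB) -> aeval e' (rho_form tUK) = rho e u.
have dP : pdef P :=
  pdef_imp (pdef_teq HN (TMeet tUK (TVar vB)) tUK) (pdef_aeval HN _ (eq^~ (rho e u))).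
have PE k : P (upd e vK k) <-> (sle (u ⊕ k) b -> rho e (u ⊕ k) = rho e u).
  have [UK BK phiK] : [/\ vU <> vK, vB <> vK & (amax phi < vK)%N] by split; var_lia.
  rewrite /P aeval_rho_form; last exact: phi_lip_PA.
    by rewrite rho_upd //= upd_same !upd_other.
  by move=> k' /orP[] /eqP <-; var_lia.
have [m um] := (sleP HN _ _).1 ub.
have [c [Pc nPc]] : exists c, P (upd e vK c) /\ ~ P (upd e vK (ssucc c)).
  apply: (pdef_jump HN (m := m) dP); first by apply/PE; rewrite (saddr0 HN).
  by rewrite PE um => /(_ (sle_refl (slattice_PA HN) b)) /esym.
move: Pc nPc; rewrite !PE => Pc /not_implyP [cb neq].
rewrite (saddrS HN) in cb neq; exists (u ⊕ c); split=> //.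
have cB : sle (u ⊕ c) b := sle_trans (slattice_PA HN) (sle_succ HN _) cb.
by rewrite Pc // => /esym.
Qed.

Lemma step_inf_le e c : sle c (e vB) ->
  inf (range (fun c => rho e (c ⊓ e vB) - rho e (ssucc (c ⊓ e vB))))
    <= rho e c - rho e (ssucc c).
Proof.
move=> cb; apply: ge_inf; last by exists c => //; rewrite cb.
exists (- (2 * abnd phi)) => _ [c' _ <-].
have := rho_bnd e (c' ⊓ e vB); have := rho_bnd e (ssucc (c' ⊓ e vB)).
by rewrite !ler_norml => /andP[_ ?] /andP[? _]; lra.
Qed.

Variable g0 : R.
Hypothesis g0_gt0 : 0 < g0.
Hypothesis g0_gap :
  forall p q, p \in avalues phi -> q \in avalues phi -> p != q -> g0 <= `|p - q|.

(* kappa = g0 / Kc makes kappa * |rho u - rho b| <= kappa * 2 B < g0, which is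
   at most any jump of rho. *)
Lemma jump_form_ge0_PA e : 0 <= aeval e (jump_form (g0 / Kc)).
Proof.
have NL := slattice_PA HN; have B0 := abnd_ge0 phi.
have Kc_gt0 : 0 < Kc by rewrite /Kc; lra.
rewrite aeval_jump_form; last exact: phi_lip_PA.
set u := e vU; set b := e vB; set X := inf _.
have rho_b : rho e b = phi_at e b := inf_between_self _ _ NL.
have kappaK : g0 / Kc * Kc = g0 by rewrite divfK // gt_eqF.
have kappa_ge0 : 0 <= g0 / Kc by rewrite divr_ge0 // ltW.
have [bu|ub] := leP (rho e b) (rho e u).
  have X0 : X <= 0.
    by have := step_inf_le (sle_refl NL b); rewrite (rho_out (@nsle_succ _ _ HN b)) rho_b subrr.
  have : 0 <= g0 / Kc * (rho e u - rho e b) by rewrite mulr_ge0 // subr_ge0.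
  lra.
have UB : sle u b by apply: contrapT => /rho_out ubE; move: ub; rewrite ubE -rho_b ltxx.
have [c [cb neq]] : exists c, sle (ssucc c) b /\ rho e c <> rho e (ssucc c).
  by apply: rho_jump => // ubE; move: ub; rewrite ubE ltxx.
have mono : rho e c <= rho e (ssucc c) := inf_between_mono b NL (phi_at_lbound e) (sle_succ HN c).
have gap : g0 <= rho e (ssucc c) - rho e c.
  rewrite -(ger0_norm (x := _ - _)) ?subr_ge0 //.
  by apply: g0_gap; rewrite ?rho_avalues // eq_sym; apply/eqP.
have := step_inf_le (sle_trans NL (sle_succ HN c) cb).
have := rho_bnd e u; have := rho_bnd e b; rewrite !ler_norml => /andP[? ?] /andP[? ?] ?.
have : 0 <= g0 / Kc * (rho e u - rho e b + 2 * abnd phi) by rewrite mulr_ge0 //; lra.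
move: kappaK; rewrite /Kc; nra.
Qed.

End PeanoSide.

Lemma jump_ineq_AA (M : LStr R) g0 (e : nat -> M) : models_AA M -> 0 < g0 ->
  (forall p q, p \in avalues phi -> q \in avalues phi -> p != q -> g0 <= `|p - q|) ->
  phi_lip e -> inf (range (fun c => rho e (c ⊓ e vB) - rho e (ssucc (c ⊓ e vB))))
    <= g0 / Kc * (rho e (e vU) - rho e (e vB)).
Proof.
move=> AA g0_gt0 g0_gap lip; rewrite -subr_ge0 -aeval_jump_form //.
exact: AA_transfer AA (fun N HN => jump_form_ge0_PA HN g0_gt0 g0_gap) e.
Qed.

End Construction.

Lemma slattice_AA (R : realType) (M : LStr R) : models_AA M -> slattice M.
Proof.
move=> AA; have law s t := @AA_transfer_teq R M s t AA.
split=> [x y|x y z|x y|x y|x y].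
- exact: (law (TMeet (TVar 0) (TVar 1)) (TMeet (TVar 1) (TVar 0))
    (fun N HN e => smeetC (slattice_PA HN) _ _) (nth x [:: x; y])).
- exact: (law (TMeet (TVar 0) (TMeet (TVar 1) (TVar 2))) (TMeet (TMeet (TVar 0) (TVar 1)) (TVar 2))
    (fun N HN e => smeetA (slattice_PA HN) _ _ _) (nth x [:: x; y; z])).
- exact: (law (TJoin (TVar 0) (TVar 1)) (TJoin (TVar 1) (TVar 0))
    (fun N HN e => sjoinC (slattice_PA HN) _ _) (nth x [:: x; y])).
- exact: (law (TMeet (TVar 0) (TJoin (TVar 0) (TVar 1))) (TVar 0)
    (fun N HN e => smeetKU (slattice_PA HN) _ _) (nth x [:: x; y])).
- exact: (law (TJoin (TVar 0) (TMeet (TVar 0) (TVar 1))) (TVar 0)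
    (fun N HN e => sjoinKI (slattice_PA HN) _ _) (nth x [:: x; y])).
Qed.

Section CutSide.
Variables (R : realType) (M : LStr R) (D I : set M) (b : M).
Hypotheses (ML : slattice M) (Icut : is_cut I).
Hypothesis Isep : forall x y, I x -> ~ I y -> slt x y.
Hypothesis Dcof : forall a, I a -> exists u, [/\ I u, D u & sle a u].
Hypothesis Ib : ~ I b.
Local Notation F := (fun x => dist_set x D).

Lemma inf_between_cut y : I y -> inf_between F b y <= 0.
Proof.
move=> Iy; have [u [Iu Du yu]] := Dcof Iy; have [ub _] := Isep Iu Ib.
apply: le_trans (inf_between_le b y u (dist_set_lbound D)) _.
by rewrite sle_join_idl // ub dist_set_mem.
Qed.

Lemma le_inf_between_out r y : (forall v, ~ I v -> sle v b -> r <= F v) ->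
  ~ I y -> sle y b -> r <= inf_between F b y.
Proof.
move=> rF Iy yb; apply: le_inf_between => z; apply: rF; last exact: sle_meetr.
case: Icut => _ Idown _ Iw; apply/Iy/(Idown _ _ _ Iw).
exact (sle_meet ML (sle_joinr ML z y) yb).
Qed.

Lemma step_lower_bound r eta c : 0 <= eta -> (forall v, ~ I v -> sle v b -> r <= F v) ->
  F b <= r + eta -> - eta <= inf_between F b (c ⊓ b) - inf_between F b (ssucc (c ⊓ b)).
Proof.
move=> eta_ge0 rF Fb; have cb := sle_meetr ML c b.
have := inf_between_le_top b ML (ssucc (c ⊓ b)) (dist_set_lbound D).
have [Icb|nIcb] := pselect (I (c ⊓ b)).
  have := @le_inf_between _ _ F b (c ⊓ b) 0 (fun z => dist_set_ge0 D ((z ⊔ (c ⊓ b)) ⊓ b)).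
  case: Icut => _ _ /(_ _ Icb) /inf_between_cut; lra.
by have := le_inf_between_out rF nIcb cb; lra.
Qed.

Lemma cut_violates_jump_ineq a kappa eps s : I a -> 0 < kappa -> 0 < eps -> eps <= s ->
  (forall v, ~ I v -> sle v b -> s <= F v) -> F b < s + kappa * eps / 2 ->
  kappa * (inf_between F b a - inf_between F b b)
    < inf (range (fun c => inf_between F b (c ⊓ b) - inf_between F b (ssucc (c ⊓ b)))).
Proof.
move=> Ia kappa_gt0 eps_gt0 eps_s sF Fb; set X := inf _.
have rho_a := inf_between_cut Ia.
have rho_b : s <= inf_between F b b := le_inf_between_out sF Ib (sle_refl ML b).
have eta_ge0 : 0 <= kappa * eps / 2 by rewrite divr_ge0 // ltW // mulr_gt0.
have step_lb : - (kappa * eps / 2) <= X.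
  apply: lb_le_inf => [|_ [c _ <-]]; last exact (step_lower_bound c eta_ge0 sF (ltW Fb)).
  by exists (inf_between F b (b ⊓ b) - inf_between F b (ssucc (b ⊓ b))), b.
have : kappa * (inf_between F b a - inf_between F b b) <= kappa * (- eps).
  by rewrite ler_pM2l //; lra.
have : 0 < kappa * eps by rewrite mulr_gt0.
lra.
Qed.

End CutSide.

Theorem mainTheorem7 (R : realType) (M : LStr R) (D I : set M) :
  models_AA M ->
  formula_definable D ->
  proper_cut I ->
  (forall x y, I x -> ~ I y -> slt x y) ->
  (forall a, I a -> exists u, [/\ I u, D u & sle a u]) ->
  forall (eps : R), 0 < eps ->
  forall b : M, ~ I b ->
  exists v, [/\ ~ I v, eps_nbhd D eps v & sle v b].
Proof.
move=> AA [_ [phi [e0 phiD]]] [Icut _] Isep Dcof eps eps_gt0 b Ib.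
apply: contrapT => no_v; have ML := slattice_AA AA.
have [[a Ia] _ _] := Icut; have [u [_ Du _]] := Dcof a Ia.
pose S := [set dist_set v D | v in [set v | ~ I v /\ sle v b]].
have eps_S : lbound S eps.
  by move=> _ [v [Iv vb] <-]; rewrite leNgt; apply/negP => Fv; apply: no_v; exists v.
have S_b : S (dist_set b D) by exists b => //; split=> //; apply: sle_refl.
have [g0 g0_gt0 g0_gap] := exists_gap (avalues phi).
have kappa_gt0 : 0 < g0 / Kc phi by rewrite divr_gt0 // /Kc; have := abnd_ge0 phi; lra.
have eta_gt0 : 0 < g0 / Kc phi * eps / 2 by rewrite divr_gt0 // mulr_gt0.
have [_ [b' [Ib' b'b] <-] Fb'] :=
  inf_adherent eta_gt0 (conj (ex_intro _ _ S_b) (ex_intro _ _ eps_S)).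
pose e := upd (upd e0 (vU phi) a) (vB phi) b'.
have phi_atE : phi_at phi e = (fun x => dist_set x D).
  by rewrite !phi_at_upd; [apply: funext => x; apply: phiD|rewrite /vU; lia|rewrite /vB; lia].
have := jump_ineq_AA AA g0_gt0 g0_gap (phi_lip_dist_set (ex_intro _ u Du) phi_atE).
rewrite /rho phi_atE /e upd_same upd_other ?upd_same; last by rewrite /vU /vB; lia.
apply/negP; rewrite -ltNge.
apply: (cut_violates_jump_ineq ML Icut Isep Dcof Ib' Ia kappa_gt0 eps_gt0 _ _ Fb').
  exact: lb_le_inf (ex_intro _ _ S_b) eps_S.
move=> v Iv vb'; apply: ge_inf; first by exists eps.
by exists v => //; split=> //; exact (sle_trans ML vb' b'b).
Qed.
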